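(* For any real numbers $0\le q_1,q_2\le 1$ there exist a non-principal ultrafilter $\mathcal U$ on $\mathbb N$ and coprime natural numbers $2\le a_i<b_i$ ($i\in\mathbb N$) such that the ultraproduct $S=\prod_{\mathcal U}S_i$ of the semigroups $S_i=\{xa_i+yb_i:x,y\in\mathbb N\}$ is a (nontrivial) limit 2-semigroup with generators $a=[(a_i)]_{\mathcal U}$, $b=[(b_i)]_{\mathcal U}$ satisfying $r(b-\alpha(b),a)=q_1$ and $r(\beta_1,ab)=q_2$.
   Context: Each $S_i$ is an ordered monoid in the language $\{+,<,0\}$; a limit 2-semigroup is an ultraproduct $\prod_{\mathcal U}S_i$ over a non-principal ultrafilter $\mathcal U$ that is not isomorphic to a standard numerical semigroup, and its generators are $a=[(a_i)]_{\mathcal U}$, $b=[(b_i)]_{\mathcal U}$. In a standard 2-semigroup with generators $a<b$: $\alpha(b)$ is the largest multiple of $a$ that is $\le b$ (namely $\lfloor b/a\rfloor a$); $\beta_1$ is the least multiple of $b$ that is $\equiv1\pmod a$, i.e. $\beta_1=kb$ with $0\le k<a$, $kb\equiv 1 \pmod a$; $ab$ is the product. These are first-order definable uniformly, so they have interpretations in $S$ (coordinatewise). For elements $x\ge x'$ and $y>y'$ of $S$, the ratio is $r(x-x',y-y')=\sup\{p/q : p,q\in\mathbb Z_{\ge0},\ q\ne0,\ S\models p\,y+q\,x'\le q\,x+p\,y'\}$, where $p\,y$ denotes $y$ added to itself $p$ times; $r(x_0,y-y')$ abbreviates the case $x'=0$, $x=x_0$ (and similarly for $y$). Thus $r(b-\alpha(b),a)=\sup\{p/q: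 S\models p a+q\alpha(b)\le qb\}$ and $r(\beta_1,ab)=\sup\{p/q: S\models p\,ab\le q\beta_1\}$. *)

From Stdlib Require Import Reals Arith List.
Open Scope R_scope.

Definition ultrafilter (U : (nat -> Prop) -> Prop) : Prop :=
  (~ U (fun _ => False)) /\
  U (fun _ => True) /\
  (forall A B : nat -> Prop, U A -> (forall i, A i -> B i) -> U B) /\
  (forall A B : nat -> Prop, U A -> U B -> U (fun i => A i /\ B i)) /\
  (forall A : nat -> Prop, U A \/ U (fun i => ~ A i)).

Definition nonprincipal (U : (nat -> Prop) -> Prop) : Prop :=
  forall n : nat, ~ U (fun i => i = n).

Definition in_sg (a b x : nat) : Prop := exists u v : nat, x = (u * a + v * b)%nat.

(** Elements of the ultraproduct prod_U S_i (S_i = S_{A i, B i}) are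
    represented by sequences that lie U-almost everywhere in S_i;
    two representatives denote the same element iff they agree U-a.e.;
    +, <, 0 are interpreted coordinatewise (U-a.e.). *)
Definition up_elt (U : (nat -> Prop) -> Prop) (A B : nat -> nat) (x : nat -> nat) :=
  U (fun i => in_sg (A i) (B i) (x i)).
Definition up_eq (U : (nat -> Prop) -> Prop) (x y : nat -> nat) := U (fun i => x i = y i).
Definition up_lt (U : (nat -> Prop) -> Prop) (x y : nat -> nat) := U (fun i => (x i < y i)%nat).
Definition up_add (x y : nat -> nat) : nat -> nat := fun i => (x i + y i)%nat.
Definition up_zero : nat -> nat := fun _ => 0%nat.

Definition numerical_semigroup (T : nat -> Prop) : Prop :=
  T 0%nat /\ (forall x y, T x -> T y -> T (x + y)%nat) /\
  exists N : nat, forall n, (N <= n)%nat -> T n.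

Definition up_iso (U : (nat -> Prop) -> Prop) (A B : nat -> nat)
    (T : nat -> Prop) (f : (nat -> nat) -> nat) : Prop :=
  (forall x, up_elt U A B x -> T (f x)) /\
  (forall t, T t -> exists x, up_elt U A B x /\ f x = t) /\
  (forall x y, up_elt U A B x -> up_elt U A B y -> (f x = f y <-> up_eq U x y)) /\
  (forall x y, up_elt U A B x -> up_elt U A B y -> f (up_add x y) = (f x + f y)%nat) /\
  (forall x y, up_elt U A B x -> up_elt U A B y -> ((f x < f y)%nat <-> up_lt U x y)) /\
  f up_zero = 0%nat.

Definition limit_2_semigroup (U : (nat -> Prop) -> Prop) (A B : nat -> nat) : Prop :=
  ~ (exists (T : nat -> Prop) (f : (nat -> nat) -> nat), numerical_semigroup T /\ up_iso U A B T f).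

Definition alpha (a b : nat) : nat := (b / a * a)%nat.
Definition beta1 (a b : nat) : nat :=
  (b * match List.find (fun k => Nat.eqb ((k * b) mod a) (1 mod a)) (List.seq 0 a) with
       | Some k => k | None => 0 end)%nat.

(** The ratio r(x - x', y - y') : its defining set
    { p/q : S |= p y + q x' <= q x + p y' }, with atomic truth in the
    ultraproduct evaluated coordinatewise (U-a.e.). *)
Definition ratio_set (U : (nat -> Prop) -> Prop) (x x' y y' : nat -> nat) : R -> Prop :=
  fun r => exists p q : nat, q <> 0%nat /\
    U (fun i => (p * y i + q * x' i <= q * x i + p * y' i)%nat) /\
    r = INR p / INR q.

From Stdlib Require Import Reals Arith Lia Lra ZArith IndefiniteDescription.
From mathcomp Require ssrbool ssrnat filter.
Open Scope R_scope.

(* Take a_i = A_i and b_i = r_i + (i+1) A_i, where r_i k_i = 1 (mod A_i) and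
   r_i/A_i -> q1, k_i/A_i -> q2.  Then alpha(b_i) = (i+1) a_i and
   beta_1 = k_i b_i, so b - alpha(b) and beta_1 are represented coordinatewise
   by r_i and k_i b_i, and a ratio in the ultraproduct is the U-limit of the
   coordinate ratios, here lim r_i/A_i = q1 and lim k_i/A_i = q2.  Since
   b_i/a_i -> oo, b exceeds every multiple of a, which is impossible in a
   numerical semigroup.  The pairs (r_i, k_i) come from Bezout: for coprime
   fractions g1/h1 ~ q1 and g2/h2 ~ q2 there are arbitrarily large A with
   h1 r = g1 A + h2, h2 k = g2 A + h1 and r k = 1 (mod A). *)

Definition proper_filter (U : (nat -> Prop) -> Prop) : Prop :=
  ~ U (fun _ => False) /\ U (fun _ => True) /\
  (forall P Q : nat -> Prop, U P -> (forall i, P i -> Q i) -> U Q) /\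
  (forall P Q : nat -> Prop, U P -> U Q -> U (fun i => P i /\ Q i)).

Lemma ultrafilter_proper (U : (nat -> Prop) -> Prop) :
  ultrafilter U -> proper_filter U.
Proof. intros [? [? [? [? _]]]]. repeat split; assumption. Qed.

Lemma ultrafilter_containing_tails :
  exists U, ultrafilter U /\ forall N, U (fun i => (N <= i)%nat).
Proof.
  destruct (filter.ultraFilterLemma filter.eventually_filter) as [G [HG Hsub]].
  assert (HGp : filter.ProperFilter G) by apply filter.ultra_proper.
  exists G; split; [repeat split|].
  - exact (filter.filter_not_empty G).
  - exact filter.filterT.
  - intros P Q HP HPQ. exact (filter.filterS HPQ HP).
  - intros P Q HP HQ. exact (filter.filterI HP HQ).
  - intro P. exact (filter.in_ultra_setVsetC P HG).
  - intro N. apply Hsub. exists N; [exact I|].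
    intros i Hi. exact (ssrbool.elimT ssrnat.leP Hi).
Qed.

Definition ulim (U : (nat -> Prop) -> Prop) (u : nat -> R) (t : R) : Prop :=
  forall eps, 0 < eps -> U (fun i => Rabs (u i - t) < eps).

Section ProperFilter.

Variable U : (nat -> Prop) -> Prop.
Hypothesis HU : proper_filter U.

Lemma filter_mono (P Q : nat -> Prop) : U P -> (forall i, P i -> Q i) -> U Q.
Proof. apply HU. Qed.

Lemma filter_and (P Q : nat -> Prop) : U P -> U Q -> U (fun i => P i /\ Q i).
Proof. apply HU. Qed.

Lemma filter_all (P : nat -> Prop) : (forall i, P i) -> U P.
Proof. intro HP. apply (filter_mono (fun _ => True)); [apply HU | auto]. Qed.

Lemma filter_nonempty (P : nat -> Prop) : U P -> ~ (forall i, ~ P i).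
Proof. intros HP Hno. apply HU. exact (filter_mono P _ HP Hno). Qed.

Hypothesis Htail : forall N, U (fun i => (N <= i)%nat).

Lemma tails_nonprincipal : nonprincipal U.
Proof.
  intros n Hn. apply HU.
  apply (filter_mono _ _ (filter_and _ _ Hn (Htail (S n)))). lia.
Qed.

Lemma ulim_of_rate (u : nat -> R) (t : R) :
  (forall i, Rabs (u i - t) <= / INR (S i)) -> ulim U u t.
Proof.
  intros Hrate eps Heps.
  destruct (archimed_cor1 eps Heps) as [N [HN HNpos]].
  apply (filter_mono _ _ (Htail N)). intros i Hi.
  assert (/ INR (S i) <= / INR N).
  { apply Rinv_le_contravar; [apply lt_0_INR; lia | apply le_INR; lia]. }
  specialize (Hrate i). lra.
Qed.

End ProperFilter.

Lemma INR_div_le (a b c d : nat) : (0 < b)%nat -> (0 < d)%nat ->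
  (a * d <= b * c)%nat -> INR a / INR b <= INR c / INR d.
Proof.
  intros Hb Hd H.
  apply lt_0_INR in Hb. apply lt_0_INR in Hd.
  apply le_INR in H. rewrite !mult_INR in H.
  apply (Rmult_le_reg_r (INR b * INR d)); [nra|].
  replace (INR a / INR b * (INR b * INR d)) with (INR a * INR d) by (field; lra).
  replace (INR c / INR d * (INR b * INR d)) with (INR b * INR c) by (field; lra).
  exact H.
Qed.

Lemma nat_floor_exists (y : R) : 0 <= y -> exists p : nat, INR p <= y < INR p + 1.
Proof.
  intros Hy. destruct (archimed y) as [H1 H2].
  assert (Hup : (0 < up y)%Z) by (apply lt_0_IZR; lra).
  exists (Z.to_nat (up y - 1)).
  rewrite INR_IZR_INZ, Z2Nat.id by lia.
  rewrite minus_IZR. simpl. lra.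
Qed.

Lemma nat_ratio_between (M t : R) : 0 <= M < t ->
  exists p q : nat, (0 < q)%nat /\ M < INR p / INR q < t.
Proof.
  intros HMt.
  destruct (archimed_cor1 (t - M)) as [q [Hq Hqpos]]; [lra|].
  assert (HqR : 0 < INR q) by (apply lt_0_INR; exact Hqpos).
  destruct (nat_floor_exists (M * INR q)) as [p [Hp1 Hp2]]; [nra|].
  exists (S p), q. split; [exact Hqpos|].
  rewrite S_INR.
  assert (E : (INR p + 1) / INR q = M + (INR p + 1 - M * INR q) * / INR q)
    by (field; lra).
  assert (Hinv : 0 < / INR q) by (apply Rinv_0_lt_compat; exact HqR).
  rewrite E. split; nra.
Qed.

Lemma ratio_atom_iff (p q x x' y y' : nat) : (x' <= x)%nat -> (y' <= y)%nat ->
  (p * y + q * x' <= q * x + p * y' <-> p * (y - y') <= q * (x - x'))%nat.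
Proof.
  intros Hx Hy.
  pose proof (Nat.mul_le_mono_l _ _ p Hy). pose proof (Nat.mul_le_mono_l _ _ q Hx).
  rewrite !Nat.mul_sub_distr_l. lia.
Qed.

Section Ratio.

Variables (U : (nat -> Prop) -> Prop) (x x' y y' : nat -> nat) (t : R).
Hypothesis HU : proper_filter U.
Hypothesis Hdom : U (fun i => x' i <= x i /\ y' i < y i)%nat.
Hypothesis Hlim : ulim U (fun i => INR (x i - x' i) / INR (y i - y' i)) t.

Lemma ratio_set_upper : is_upper_bound (ratio_set U x x' y y') t.
Proof.
  intros z [p [q [Hq [Hatom ->]]]].
  destruct (Rle_or_lt (INR p / INR q) t) as [|Hgt]; [assumption|exfalso].
  apply (filter_nonempty U HU _
           (filter_and U HU _ _ (filter_and U HU _ _ Hdom Hatom)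
              (Hlim _ (proj2 (Rlt_0_minus _ _) Hgt)))).
  intros i [[[Hx Hy] Hi] Hclose].
  apply ratio_atom_iff in Hi; [|lia|lia].
  pose proof (INR_div_le p q (x i - x' i) (y i - y' i) ltac:(lia) ltac:(lia) Hi).
  apply Rabs_def2 in Hclose. lra.
Qed.

Lemma ratio_set_least (M : R) :
  is_upper_bound (ratio_set U x x' y y') M -> t <= M.
Proof.
  intros HM. destruct (Rle_or_lt t M) as [|HMt]; [assumption|exfalso].
  assert (HM0 : INR 0 / INR 1 <= M).
  { apply HM. exists 0%nat, 1%nat. split; [lia|split; [|reflexivity]].
    apply (filter_mono U HU _ _ Hdom). intros i [Hx _]. lia. }
  simpl in HM0.
  destruct (nat_ratio_between M t) as [p [q [Hq [HMpq Hpqt]]]]; [lra|].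
  assert (Hin : ratio_set U x x' y y' (INR p / INR q)).
  { exists p, q. split; [lia|split; [|reflexivity]].
    apply (filter_mono U HU _ _ (filter_and U HU _ _ Hdom (Hlim _ (proj2 (Rlt_0_minus _ _) Hpqt)))).
    intros i [[Hx Hy] Hclose]. apply ratio_atom_iff; [lia|lia|].
    destruct (Nat.le_gt_cases (p * (y i - y' i)) (q * (x i - x' i))) as [|Hc];
      [assumption|exfalso].
    pose proof (INR_div_le (x i - x' i) (y i - y' i) p q ltac:(lia) ltac:(lia) ltac:(nia)).
    apply Rabs_def2 in Hclose. lra. }
  specialize (HM _ Hin). lra.
Qed.

Lemma ratio_set_lub : is_lub (ratio_set U x x' y y') t.
Proof. exact (conj ratio_set_upper ratio_set_least). Qed.

End Ratio.

Lemma limit_2_semigroup_of_unbounded (U : (nat -> Prop) -> Prop) (A B : nat -> nat) :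
  proper_filter U -> U (fun i => 0 < A i)%nat ->
  (forall K, U (fun i => K * A i < B i)%nat) -> limit_2_semigroup U A B.
Proof.
  intros HU HA HB [T [f [_ [_ [_ [_ [Hadd [Hlt H0]]]]]]]].
  assert (Hmul : forall K, up_elt U A B (fun i => K * A i)%nat).
  { intro K. apply (filter_all U HU). intro i. exists K, 0%nat. lia. }
  assert (HAelt : up_elt U A B A).
  { apply (filter_all U HU). intro i. exists 1%nat, 0%nat. lia. }
  assert (HBelt : up_elt U A B B).
  { apply (filter_all U HU). intro i. exists 0%nat, 1%nat. lia. }
  assert (HfK : forall K, f (fun i => K * A i)%nat = (K * f A)%nat).
  { induction K as [|K IH]; [exact H0|].
    change (fun i => S K * A i)%nat with (up_add A (fun i => K * A i)%nat).
    rewrite Hadd, IH by (apply HAelt || apply Hmul). reflexivity. }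
  assert (HfA : (0 < f A)%nat).
  { rewrite <- H0. apply Hlt; [apply (Hmul 0%nat) | exact HAelt | exact HA]. }
  assert (HfB : (f (fun i => f B * A i)%nat < f B)%nat).
  { apply Hlt; [apply Hmul | exact HBelt | apply HB]. }
  rewrite HfK in HfB. nia.
Qed.

Lemma mod_inverse_unique (a b j k : nat) : (j < a)%nat -> (k < a)%nat ->
  ((j * b) mod a = 1)%nat -> ((k * b) mod a = 1)%nat -> j = k.
Proof.
  intros Hj Hk Hjb Hkb.
  assert (Hj' : ((j * (k * b)) mod a = j)%nat).
  { rewrite <- Nat.Div0.mul_mod_idemp_r, Hkb, Nat.mul_1_r. apply Nat.mod_small, Hj. }
  assert (Hk' : ((k * (j * b)) mod a = k)%nat).
  { rewrite <- Nat.Div0.mul_mod_idemp_r, Hjb, Nat.mul_1_r. apply Nat.mod_small, Hk. }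
  replace (k * (j * b))%nat with (j * (k * b))%nat in Hk' by ring. congruence.
Qed.

Lemma gcd_one_of_mod_inverse (a b k : nat) : ((k * b) mod a = 1)%nat -> Nat.gcd a b = 1%nat.
Proof.
  intros Hkb. apply Nat.divide_1_r.
  apply (Nat.divide_add_cancel_r _ (a * ((k * b) / a))).
  - apply Nat.divide_mul_l, Nat.gcd_divide_l.
  - rewrite <- Hkb, <- Nat.div_mod_eq. apply Nat.divide_mul_r, Nat.gcd_divide_r.
Qed.

Lemma find_seq_first (f : nat -> bool) (s len k : nat) : (s <= k < s + len)%nat ->
  f k = true -> (forall j, s <= j < k -> f j = false)%nat ->
  List.find f (List.seq s len) = Some k.
Proof.
  revert s. induction len as [|len IH]; intros s Hk Hfk Hbefore; [lia|].
  simpl. destruct (Nat.eq_dec s k) as [->|Hne].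
  - rewrite Hfk. reflexivity.
  - rewrite (Hbefore s) by lia. apply IH; [lia | exact Hfk |].
    intros j Hj. apply Hbefore. lia.
Qed.

Lemma beta1_eq (a b k : nat) : (k < a)%nat -> ((k * b) mod a = 1)%nat ->
  beta1 a b = (b * k)%nat.
Proof.
  intros Hk Hkb.
  assert (Ha : (1 < a)%nat).
  { destruct a as [|[|a]]; [lia | rewrite Nat.mod_1_r in Hkb; discriminate | lia]. }
  unfold beta1. rewrite (Nat.mod_small 1 a Ha).
  rewrite (find_seq_first _ 0 a k); [reflexivity | lia | apply Nat.eqb_eq, Hkb |].
  intros j Hj. apply Nat.eqb_neq. intro Hjb.
  pose proof (mod_inverse_unique a b j k ltac:(lia) Hk Hjb Hkb). lia.
Qed.

Lemma alpha_eq (a r s : nat) : (r < a)%nat -> alpha a (r + s * a) = (s * a)%nat.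
Proof.
  intros Hr. unfold alpha.
  rewrite Nat.div_add, Nat.div_small by lia. reflexivity.
Qed.

(* From Bezout identities c h1 = d g1 + 1 and w h2 = v g2 + 1, put
   X = c + g1 N and Y = d + h1 N (so X h1 = Y g1 + 1); the witnesses are
   chosen so that r k - m A = (X h1 - Y g1)(w h2 - v g2) = 1. *)
Lemma inverse_pair_exists (g1 h1 g2 h2 N : nat) : (0 < h1)%nat -> (0 < h2)%nat ->
  Nat.gcd h1 g1 = 1%nat -> Nat.gcd h2 g2 = 1%nat ->
  exists A r k m : nat, (N <= A /\ h1 * r = g1 * A + h2 /\ h2 * k = g2 * A + h1 /\
                         r * k = m * A + 1)%nat.
Proof.
  intros Hh1 Hh2 Hgcd1 Hgcd2.
  destruct (Nat.gcd_bezout_pos h1 g1 Hh1) as [c [d Hcd]]. rewrite Hgcd1 in Hcd.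
  destruct (Nat.gcd_bezout_pos h2 g2 Hh2) as [w [v Hwv]]. rewrite Hgcd2 in Hwv.
  set (X := (c + g1 * N)%nat). set (Y := (d + h1 * N)%nat).
  assert (HXY : (X * h1 = Y * g1 + 1)%nat) by (unfold X, Y; lia).
  exists (Y * h2 + h1 * v)%nat, (X * h2 + g1 * v)%nat, (Y * g2 + h1 * w)%nat,
         (X * g2 + g1 * w)%nat.
  split; [|split; [|split]].
  - unfold Y. nia.
  - assert (E : (h1 * (X * h2 + g1 * v) + Y * g1 * h2 = g1 * (Y * h2 + h1 * v) + X * h1 * h2)%nat)
      by ring.
    rewrite HXY in E. lia.
  - assert (E : (h2 * (Y * g2 + h1 * w) + v * g2 * h1 = g2 * (Y * h2 + h1 * v) + w * h2 * h1)%nat)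
      by ring.
    rewrite Hwv in E. lia.
  - assert (E : ((X * h2 + g1 * v) * (Y * g2 + h1 * w) + X * h1 * (v * g2) + Y * g1 * (w * h2)
               = (X * g2 + g1 * w) * (Y * h2 + h1 * v) + X * h1 * (w * h2) + Y * g1 * (v * g2))%nat)
      by ring.
    rewrite HXY, Hwv in E. lia.
Qed.

Lemma coprime_fraction (p n : nat) : (p < n)%nat ->
  exists g h : nat, (0 < h)%nat /\ (g < h)%nat /\ Nat.gcd h g = 1%nat /\
                    INR g / INR h = INR p / INR n.
Proof.
  intros Hpn. set (G := Nat.gcd n p).
  assert (HG : G <> 0%nat) by (unfold G; intro E; apply Nat.gcd_eq_0 in E; lia).
  destruct (Nat.gcd_divide_l n p) as [h Eh]. destruct (Nat.gcd_divide_r n p) as [g Eg].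
  fold G in Eh, Eg.
  exists g, h. split; [|split; [|split]].
  - destruct h; lia.
  - nia.
  - replace h with (n / G)%nat by (rewrite Eh; apply Nat.div_mul, HG).
    replace g with (p / G)%nat by (rewrite Eg; apply Nat.div_mul, HG).
    apply Nat.gcd_div_gcd; [exact HG | reflexivity].
  - rewrite Eh, Eg, !mult_INR. field. split; apply not_0_INR; [exact HG | lia].
Qed.

Lemma coprime_fraction_approx (t : R) (n : nat) : 0 <= t <= 1 -> (0 < n)%nat ->
  exists g h : nat, (0 < h)%nat /\ (g < h)%nat /\ Nat.gcd h g = 1%nat /\
                    t - 2 / INR n <= INR g / INR h <= t.
Proof.
  intros Ht Hn.
  assert (HnR : 1 <= INR n) by (apply (le_INR 1); exact Hn).
  destruct (nat_floor_exists (t * INR n)) as [p [Hp1 Hp2]]; [nra|].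
  assert (Hpn : (p < S n)%nat) by (apply INR_lt; rewrite S_INR; nra).
  destruct (coprime_fraction p (S n) Hpn) as [g [h [Hh [Hgh [Hgcd Heq]]]]].
  exists g, h. split; [exact Hh|split; [exact Hgh|split; [exact Hgcd|]]].
  rewrite Heq, S_INR.
  assert (Hu : 0 < / (INR n + 1)) by (apply Rinv_0_lt_compat; lra).
  assert (Hv : 0 < / INR n) by (apply Rinv_0_lt_compat; lra).
  assert (Eu : (INR n + 1) * / (INR n + 1) = 1) by (field; lra).
  assert (Ev : INR n * / INR n = 1) by (field; lra).
  unfold Rdiv. split; nra.
Qed.

Lemma ratio_error (x A g h e n : nat) : (0 < A)%nat -> (0 < h)%nat -> (0 < n)%nat ->
  (h * x = g * A + e)%nat -> (n * e <= h * A)%nat ->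
  INR g / INR h <= INR x / INR A <= INR g / INR h + 1 / INR n.
Proof.
  intros HA Hh Hn E He. split.
  - apply INR_div_le; [exact Hh | exact HA | lia].
  - replace (INR g / INR h + 1 / INR n) with (INR (g * n + h) / INR (h * n)).
    + apply INR_div_le; [exact HA | nia | nia].
    + rewrite plus_INR, !mult_INR. field. split; apply not_0_INR; lia.
Qed.

Definition approx_inverse_pair (q1 q2 eps : R) (A r k : nat) : Prop :=
  (1 < A)%nat /\ (r < A)%nat /\ (k < A)%nat /\ ((r * k) mod A = 1)%nat /\
  Rabs (INR r / INR A - q1) <= eps /\ Rabs (INR k / INR A - q2) <= eps.

Lemma approx_inverse_pair_exists (q1 q2 : R) (n : nat) :
  0 <= q1 <= 1 -> 0 <= q2 <= 1 -> (0 < n)%nat ->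
  exists A r k, approx_inverse_pair q1 q2 (2 / INR n) A r k.
Proof.
  intros Hq1 Hq2 Hn.
  destruct (coprime_fraction_approx q1 n Hq1 Hn) as [g1 [h1 [Hh1 [Hgh1 [Hgcd1 Happrox1]]]]].
  destruct (coprime_fraction_approx q2 n Hq2 Hn) as [g2 [h2 [Hh2 [Hgh2 [Hgcd2 Happrox2]]]]].
  destruct (inverse_pair_exists g1 h1 g2 h2 (n * (h1 + h2) + 2) Hh1 Hh2 Hgcd1 Hgcd2)
    as [A [r [k [m [HA [Hr [Hk Hrk]]]]]]].
  assert (Hr_lt : (r < A)%nat) by nia.
  assert (Hk_lt : (k < A)%nat) by nia.
  pose proof (ratio_error r A g1 h1 h2 n ltac:(lia) Hh1 Hn Hr ltac:(nia)) as Er.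
  pose proof (ratio_error k A g2 h2 h1 n ltac:(lia) Hh2 Hn Hk ltac:(nia)) as Ek.
  assert (Hinv : 0 < / INR n) by (apply Rinv_0_lt_compat, lt_0_INR, Hn).
  exists A, r, k. split; [lia|split; [exact Hr_lt|split; [exact Hk_lt|split]]].
  - rewrite Hrk, Nat.add_comm, Nat.Div0.mod_add. apply Nat.mod_small. lia.
  - unfold Rdiv in *. split; apply Rabs_le; lra.
Qed.

Lemma approx_inverse_pair_sequences (q1 q2 : R) : 0 <= q1 <= 1 -> 0 <= q2 <= 1 ->
  exists A r k : nat -> nat,
    forall i, approx_inverse_pair q1 q2 (/ INR (S i)) (A i) (r i) (k i).
Proof.
  intros Hq1 Hq2.
  destruct (functional_choice (fun i (c : nat * nat * nat) =>
              let '(A, r, k) := c in approx_inverse_pair q1 q2 (/ INR (S i)) A r k))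
    as [c Hc].
  { intro i.
    destruct (approx_inverse_pair_exists q1 q2 (2 * S i) Hq1 Hq2 ltac:(lia))
      as [A [r [k H]]].
    exists (A, r, k).
    replace (/ INR (S i)) with (2 / INR (2 * S i)); [exact H|].
    rewrite mult_INR. simpl (INR 2). field. apply not_0_INR. lia. }
  exists (fun i => fst (fst (c i))), (fun i => snd (fst (c i))), (fun i => snd (c i)).
  intro i. specialize (Hc i). destruct (c i) as [[A r] k]. exact Hc.
Qed.

Section Construction.

Variables (q1 q2 : R) (A r k : nat -> nat).
Hypothesis Hpair : forall i, approx_inverse_pair q1 q2 (/ INR (S i)) (A i) (r i) (k i).

Definition Bseq (i : nat) : nat := (r i + S i * A i)%nat.

Lemma k_mul_Bseq_mod (i : nat) : ((k i * Bseq i) mod A i = 1)%nat.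
Proof.
  destruct (Hpair i) as [_ [_ [_ [Hrk _]]]].
  unfold Bseq. rewrite Nat.mul_add_distr_l, Nat.mul_assoc, Nat.Div0.mod_add.
  rewrite Nat.mul_comm. exact Hrk.
Qed.

Lemma Bseq_coprime (i : nat) :
  (2 <= A i)%nat /\ (A i < Bseq i)%nat /\ Nat.gcd (A i) (Bseq i) = 1%nat.
Proof.
  destruct (Hpair i) as [HA [_ [_ [Hrk _]]]].
  assert (Hr : r i <> 0%nat) by (intro E; rewrite E, Nat.mul_0_l, Nat.Div0.mod_0_l in Hrk; discriminate).
  split; [lia|split; [unfold Bseq; nia|]].
  exact (gcd_one_of_mod_inverse _ _ _ (k_mul_Bseq_mod i)).
Qed.

Lemma alpha_Bseq (i : nat) : alpha (A i) (Bseq i) = (S i * A i)%nat.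
Proof. apply alpha_eq. apply Hpair. Qed.

Lemma beta1_Bseq (i : nat) : beta1 (A i) (Bseq i) = (Bseq i * k i)%nat.
Proof. apply beta1_eq; [apply Hpair | apply k_mul_Bseq_mod]. Qed.

Variable U : (nat -> Prop) -> Prop.
Hypothesis HU : proper_filter U.
Hypothesis Htail : forall N, U (fun i => (N <= i)%nat).

Lemma Bseq_limit_2_semigroup : limit_2_semigroup U A Bseq.
Proof.
  apply limit_2_semigroup_of_unbounded; [exact HU| |].
  - apply (filter_all U HU). intro i. destruct (Bseq_coprime i). lia.
  - intro K. apply (filter_mono U HU _ _ (Htail K)). intros i Hi.
    destruct (Bseq_coprime i). unfold Bseq. nia.
Qed.

Lemma Bseq_ratio_alpha :
  is_lub (ratio_set U Bseq (fun i => alpha (A i) (Bseq i)) A up_zero) q1.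
Proof.
  apply ratio_set_lub; [exact HU| |apply (ulim_of_rate U HU Htail)].
  - apply (filter_all U HU). intro i. rewrite alpha_Bseq. unfold Bseq, up_zero.
    destruct (Bseq_coprime i). lia.
  - intro i. rewrite alpha_Bseq. unfold up_zero.
    replace (Bseq i - S i * A i)%nat with (r i) by (unfold Bseq; lia).
    rewrite Nat.sub_0_r. apply Hpair.
Qed.

Lemma Bseq_ratio_beta1 :
  is_lub (ratio_set U (fun i => beta1 (A i) (Bseq i)) up_zero
                      (fun i => A i * Bseq i)%nat up_zero) q2.
Proof.
  apply ratio_set_lub; [exact HU| |apply (ulim_of_rate U HU Htail)].
  - apply (filter_all U HU). intro i. unfold up_zero.
    destruct (Bseq_coprime i). nia.
  - intro i. rewrite beta1_Bseq. unfold up_zero. rewrite !Nat.sub_0_r.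
    destruct (Bseq_coprime i) as [HA [HB _]].
    replace (INR (Bseq i * k i) / INR (A i * Bseq i)) with (INR (k i) / INR (A i)).
    + apply Hpair.
    + rewrite !mult_INR. field. split; apply not_0_INR; lia.
Qed.

End Construction.

Theorem proposition2p8 (q1 q2 : R) :
  0 <= q1 <= 1 -> 0 <= q2 <= 1 ->
  exists (U : (nat -> Prop) -> Prop) (A B : nat -> nat),
    ultrafilter U /\ nonprincipal U /\
    (forall i, (2 <= A i)%nat /\ (A i < B i)%nat /\ Nat.gcd (A i) (B i) = 1%nat) /\
    limit_2_semigroup U A B /\
    is_lub (ratio_set U B (fun i => alpha (A i) (B i)) A up_zero) q1 /\
    is_lub (ratio_set U (fun i => beta1 (A i) (B i)) up_zero
                        (fun i => (A i * B i)%nat) up_zero) q2.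
Proof.
  intros Hq1 Hq2.
  destruct ultrafilter_containing_tails as [U [HU Htail]].
  pose proof (ultrafilter_proper U HU) as HUp.
  destruct (approx_inverse_pair_sequences q1 q2 Hq1 Hq2) as [A [r [k Hpair]]].
  exists U, A, (Bseq A r).
  split; [exact HU|]. split; [exact (tails_nonprincipal U HUp Htail)|].
  split; [exact (Bseq_coprime q1 q2 A r k Hpair)|].
  split; [exact (Bseq_limit_2_semigroup q1 q2 A r k Hpair U HUp Htail)|].
  split; [exact (Bseq_ratio_alpha q1 q2 A r k Hpair U HUp Htail)|].
  exact (Bseq_ratio_beta1 q1 q2 A r k Hpair U HUp Htail).
Qed.
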